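(* Let $(M,g)$ be a hyperkähler K3 surface with complex structures $I,J,K=IJ$ and Kähler forms $\omega_I,\omega_J,\omega_K$. Assume: - $Y=(M,J)$ is an elliptic K3 surface $\pi:Y\to\mathbb P^1$ with a section $\sigma_0$ and fibre class $f$; - the holomorphic two-form of $Y$ is $\sigma_J=\omega_K+i\omega_I$. Let $X=(M,I)$ with $\sigma_I=\omega_J+i\omega_K$. Let $U'\subset\Gamma=H^2(M,\mathbb Z)$ be the hyperbolic plane with basis $v=f$, $v^*=f+[\sigma_0]$, identified with $U$ via $v\mapsto w$, $v^*\mapsto w^*$, and let $\Gamma'=U'^\perp$, so $\Gamma=\Gamma'\oplus U'$. Put $\mathrm{vol}(f)=\langle\omega_J,f\rangle$. Then the $\tilde\xi$-mirror of $(X,\omega_I,B=0)$ is given by $$\tilde\xi(\gamma((P_{\sigma_I},\omega_I),0))=\gamma((P_{\sigma^\vee},\omega^\vee),B^\vee)$$ for some $B^\vee\in\Gamma_{\mathbb R}$, where $$\sigma^\vee=\frac{1}{\mathrm{vol}(f)}\Big(\tfrac{\omega_I^2}{2}f+[\sigma_0]+f+i\omega_I\Big),\qquad \omega^\vee=\frac{1}{\mathrm{vol}(f)}\mathrm{Im}(\sigma_I).$$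
   Context: For a hyperkähler metric, $\omega_\lambda=g(\lambda(\cdot),\cdot)$. The form $\langle\ ,\ \rangle$ on $\Gamma=H^2(M,\mathbb Z)$ is the intersection form, extended complex-bilinearly. $U$ is the hyperbolic plane with standard basis $(w,w^* )$ ($w^2={w^*}^2=0$, $\langle w,w^*\rangle=1$). $P_\sigma$ is the oriented plane spanned by $\mathrm{Re}\,\sigma,\mathrm{Im}\,\sigma$. $\gamma$ sends $((P,\omega),B)$ to $(H_1,H_2)$ with: - $H_1=\{x-\langle x,B\rangle w:x\in P\}$, oriented via $P$; - $H_2$ with ordered basis $\big(\tfrac12(\omega^2-B^2)w+w^*+B,\ \omega-\langle\omega,B\rangle w\big)$. $\xi\in \mathrm O(\Gamma\oplus U)$ is the identity on $\Gamma'$ and swaps $v\leftrightarrow w$, $v^*\leftrightarrow w^*$. $\iota(H_1,H_2)=(H_2,H_1)$, and $\tilde\xi=\iota\circ\xi$. *)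

From HB Require Import structures.
From mathcomp Require Import all_boot all_order all_algebra.
From mathcomp Require Import reals.
Set Implicit Arguments. Unset Strict Implicit. Unset Printing Implicit Defensive.
Import Order.TTheory GRing.Theory Num.Theory.
Local Open Scope ring_scope.

(* Gamma = H^2(M,Z) is modelled as 'rV[int]_22 with Gram matrix Q : 'M[int]_22
   (the intersection form); Gamma_R = 'rV[R]_22. *)

Definition intv (R : realType) (x : 'rV[int]_22) : 'rV[R]_22 :=
  map_mx (fun z : int => z%:~R) x.
Definition formR (R : realType) (Q : 'M[int]_22) : 'M[R]_22 :=
  map_mx (fun z : int => z%:~R) Q.

Definition bform (R : realType) (Q : 'M[int]_22) (x y : 'rV[R]_22) : R :=
  (x *m formR R Q *m y^T) ord0 ord0.

Definition is_K3_lattice (R : realType) (Q : 'M[int]_22) : Prop :=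
  [/\ Q^T = Q,
      (forall i, (2 %| Q i i)%Z),
      (\det Q = 1 \/ \det Q = -1) &
      exists P : 'M[R]_22, P \in unitmx /\
        P *m formR R Q *m P^T = diag_mx (\row_(i < 22) (if (i < 3)%N then 1 else -1))].

(* (Gamma + U)_R is modelled as 'rV[R]_(22 + 2): Gamma_R embedded in the first
   22 coordinates, U_R = span(w, w^* ) the last two. *)
Definition emb (R : realType) (x : 'rV[R]_22) : 'rV[R]_(22 + 2) := row_mx x 0.
Definition wU (R : realType) : 'rV[R]_(22 + 2) := row_mx 0 (delta_mx ord0 ord0).
Definition wsU (R : realType) : 'rV[R]_(22 + 2) := row_mx 0 (delta_mx ord0 ord_max).

(* An oriented plane is represented by an ordered basis (a pair of vectors). *)
Definition oplane_eq (R : realType) (n : nat) (a b : 'rV[R]_n * 'rV[R]_n) : Prop :=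
  exists m : 'M[R]_2, 0 < \det m /\
    b.1 = m ord0 ord0 *: a.1 + m ord0 ord_max *: a.2 /\
    b.2 = m ord_max ord0 *: a.1 + m ord_max ord_max *: a.2.

Definition pplane_eq (R : realType) (n : nat)
  (H H' : ('rV[R]_n * 'rV[R]_n) * ('rV[R]_n * 'rV[R]_n)) : Prop :=
  oplane_eq H.1 H'.1 /\ oplane_eq H.2 H'.2.

(* A complex class sigma = Re sigma + i Im sigma in Gamma_C is represented by
   the pair (Re sigma, Im sigma); P_sigma is the oriented plane with ordered
   basis (Re sigma, Im sigma). *)
Definition Psig (R : realType) (s : 'rV[R]_22 * 'rV[R]_22) := s.

Definition gamma (R : realType) (Q : 'M[int]_22) (P : 'rV[R]_22 * 'rV[R]_22)
  (om B : 'rV[R]_22) :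
  ('rV[R]_(22 + 2) * 'rV[R]_(22 + 2)) * ('rV[R]_(22 + 2) * 'rV[R]_(22 + 2)) :=
  let h x := emb x - bform Q x B *: wU R in
  ((h P.1, h P.2),
   ((2^-1 * (bform Q om om - bform Q B B)) *: wU R + wsU R + emb B,
    emb om - bform Q om B *: wU R)).

Definition act_pair (R : realType) (xi : 'rV[R]_(22 + 2) -> 'rV[R]_(22 + 2))
  (H : ('rV[R]_(22 + 2) * 'rV[R]_(22 + 2)) * ('rV[R]_(22 + 2) * 'rV[R]_(22 + 2))) :=
  ((xi H.1.1, xi H.1.2), (xi H.2.1, xi H.2.2)).
Definition iota (T : Type) (H : T * T) : T * T := (H.2, H.1).
Definition xi_tilde (R : realType) (xi : 'rV[R]_(22 + 2) -> 'rV[R]_(22 + 2)) H :=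
  iota (act_pair xi H).

From Pilot Require Import Defs.
From HB Require Import structures.
From mathcomp Require Import all_boot all_order all_algebra.
From mathcomp Require Import reals.
From mathcomp Require Import ring.
Set Implicit Arguments. Unset Strict Implicit. Unset Printing Implicit Defensive.
Import Order.TTheory GRing.Theory Num.Theory.
Local Open Scope ring_scope.

(* Since xi is the identity on U'^perp and swaps U' with U, on Gamma_R it acts by
   x |-> x + <x,v^*> (w - v) + <x,v> (w^* - v^* ).  Hence xi fixes omega_I and
   omega_K, which are orthogonal to f and [sigma_0], and sends the first vector
   (omega_I^2/2) w + w^* of H_2 to (omega_I^2/2) f + f + [sigma_0].  After iota,
   both planes of the image are vol(f) times the planes of
   gamma((P_sigma^vee, omega^vee), B^vee), where B^vee is read off from
   xi(omega_J) / vol(f) by normalising its w^*-coefficient to 1. *)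

Section IntersectionForm.
Variables (R : realType) (Q : 'M[int]_22).

Lemma bformDl (x y z : 'rV[R]_22) : bform Q (x + y) z = bform Q x z + bform Q y z.
Proof. by rewrite /bform !mulmxDl mxE. Qed.

Lemma bformZl a (x z : 'rV[R]_22) : bform Q (a *: x) z = a * bform Q x z.
Proof. by rewrite /bform -!scalemxAl mxE. Qed.

Lemma bformBl (x y z : 'rV[R]_22) : bform Q (x - y) z = bform Q x z - bform Q y z.
Proof. by rewrite bformDl -scaleN1r bformZl mulN1r. Qed.

Lemma bformx0 (x : 'rV[R]_22) : bform Q x 0 = 0.
Proof. by rewrite /bform trmx0 mulmx0 mxE. Qed.

Lemma bform_suml (I : finType) (F : I -> 'rV[R]_22) z :
  bform Q (\sum_i F i) z = \sum_i bform Q (F i) z.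
Proof.
apply: (big_morph (bform Q ^~ z)) => [x y|]; first exact: bformDl.
by rewrite /bform !mul0mx mxE.
Qed.

Lemma bform_int (x y : 'rV[int]_22) :
  bform Q (intv R x) (intv R y) = ((x *m Q *m y^T) 0 0)%:~R.
Proof. by rewrite /bform /intv /formR map_trmx -!map_mxM mxE. Qed.

Hypothesis Qsym : Q^T = Q.

Lemma bformC (x y : 'rV[R]_22) : bform Q x y = bform Q y x.
Proof.
have entry_trmx (A : 'M[R]_1) : A 0 0 = A^T 0 0 by rewrite mxE.
by rewrite /bform entry_trmx !trmx_mul trmxK /formR map_trmx Qsym mulmxA.
Qed.

Lemma bformDr (x y z : 'rV[R]_22) : bform Q z (x + y) = bform Q z x + bform Q z y.
Proof. by rewrite !(bformC z) bformDl. Qed.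

Lemma bformZr a (x z : 'rV[R]_22) : bform Q z (a *: x) = a * bform Q z x.
Proof. by rewrite !(bformC z) bformZl. Qed.

Lemma bformBr (x y z : 'rV[R]_22) : bform Q z (x - y) = bform Q z x - bform Q z y.
Proof. by rewrite !(bformC z) bformBl. Qed.

End IntersectionForm.

Section Embeddings.
Variable R : realType.

Lemma embD (x y : 'rV[R]_22) : emb (x + y) = emb x + emb y.
Proof. by rewrite /emb add_row_mx addr0. Qed.

Lemma embZ a (x : 'rV[R]_22) : emb (a *: x) = a *: emb x.
Proof. by rewrite /emb scale_row_mx scaler0. Qed.

Lemma embB (x y : 'rV[R]_22) : emb (x - y) = emb x - emb y.
Proof. by rewrite embD -scaleN1r embZ scaleN1r. Qed.

Lemma emb0 : emb (0 : 'rV[R]_22) = 0.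
Proof. by rewrite /emb row_mx0. Qed.

Lemma emb_sum (I : finType) (F : I -> 'rV[R]_22) : emb (\sum_i F i) = \sum_i emb (F i).
Proof. exact: (big_morph (@emb R) embD emb0). Qed.

Lemma intvD (x y : 'rV[int]_22) : intv R (x + y) = intv R x + intv R y.
Proof. exact: map_mxD. Qed.

Lemma intvB (x y : 'rV[int]_22) : intv R (x - y) = intv R x - intv R y.
Proof. exact: map_mxB. Qed.

Lemma intvZ a (x : 'rV[int]_22) : intv R (a *: x) = a%:~R *: intv R x.
Proof. exact: map_mxZ. Qed.

Lemma intv_delta i : intv R 'e_i = 'e_i.
Proof. exact: map_delta_mx. Qed.

End Embeddings.

Section HyperbolicSwap.
Variables (R : realType) (Q : 'M[int]_22).
Hypothesis Qsym : Q^T = Q.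
Variables (vZ vsZ : 'rV[int]_22) (xi : {linear 'rV[R]_(22 + 2) -> 'rV[R]_(22 + 2)}).
Let v := intv R vZ.
Let vs := intv R vsZ.
Hypotheses (v_isotropic : bform Q v v = 0) (vs_isotropic : bform Q vs vs = 0)
  (v_vs : bform Q v vs = 1).
Hypothesis xi_id_perp : forall x : 'rV[int]_22,
  bform Q (intv R x) v = 0 -> bform Q (intv R x) vs = 0 ->
  xi (emb (intv R x)) = emb (intv R x).
Hypotheses (xi_v : xi (emb v) = wU R) (xi_vs : xi (emb vs) = wsU R).

(* An integral class x splits as x' + <x,vs> v + <x,v> vs with x' in the
   integral orthogonal complement of span(v, vs), on which xi is the identity. *)
Lemma xi_emb_int (x : 'rV[int]_22) :
  xi (emb (intv R x)) = emb (intv R x)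
    + bform Q (intv R x) vs *: (wU R - emb v) + bform Q (intv R x) v *: (wsU R - emb vs).
Proof.
set a := bform Q (intv R x) vs; set b := bform Q (intv R x) v.
pose x' := x - ((x *m Q *m vsZ^T) 0 0) *: vZ - ((x *m Q *m vZ^T) 0 0) *: vsZ.
have x'E : intv R x' = intv R x - a *: v - b *: vs.
  by rewrite /x' !intvB !intvZ /a /b /v /vs !bform_int.
have vs_v : bform Q vs v = 1 by rewrite bformC.
have x'_v : bform Q (intv R x') v = 0.
  by rewrite x'E !bformBl !bformZl v_isotropic vs_v mulr0 subr0 mulr1 subrr.
have x'_vs : bform Q (intv R x') vs = 0.
  by rewrite x'E !bformBl !bformZl v_vs vs_isotropic mulr0 subr0 mulr1 subrr.
have xE : intv R x = intv R x' + a *: v + b *: vs by rewrite x'E addrAC !subrK.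
rewrite [in LHS]xE !embD !embZ !linearD !linearZ /= xi_id_perp // xi_v xi_vs.
rewrite x'E !embB !embZ.
by apply/rowP => j; rewrite !mxE; ring.
Qed.

Lemma xi_emb (x : 'rV[R]_22) :
  xi (emb x) = emb x + bform Q x vs *: (wU R - emb v) + bform Q x v *: (wsU R - emb vs).
Proof.
have xE : x = \sum_i x 0 i *: intv R 'e_i.
  by rewrite {1}(row_sum_delta x); apply: eq_bigr => i _; rewrite intv_delta.
rewrite xE emb_sum linear_sum !bform_suml !scaler_suml -!big_split /=.
apply: eq_bigr => i _.
by rewrite embZ linearZ /= xi_emb_int !bformZl !scalerDr !scalerA.
Qed.

End HyperbolicSwap.

Lemma oplane_eq_scale (R : realType) n (a : R) (x y x' y' : 'rV[R]_n) :
  0 < a -> x' = a *: x -> y' = a *: y -> oplane_eq (x, y) (x', y').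
Proof.
move=> a_gt0 -> ->; exists a%:M; split; first by rewrite det_scalar exprn_gt0.
by rewrite !mxE /= !mulr1n !mulr0n !scale0r addr0 add0r.
Qed.

Section Mirror.
Variables (R : realType) (Q : 'M[int]_22).
Hypothesis Qsym : Q^T = Q.
Variables (omI omJ omK f s0 : 'rV[R]_22) (xi : {linear 'rV[R]_(22 + 2) -> 'rV[R]_(22 + 2)}).
Hypotheses (f_f : bform Q f f = 0) (s0_s0 : bform Q s0 s0 = -2) (f_s0 : bform Q f s0 = 1).
Hypotheses (omI_f : bform Q omI f = 0) (omI_s0 : bform Q omI s0 = 0)
  (omK_f : bform Q omK f = 0) (omK_s0 : bform Q omK s0 = 0)
  (omI_omJ : bform Q omI omJ = 0) (omK_omJ : bform Q omK omJ = 0)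
  (omK_omK : bform Q omK omK = bform Q omJ omJ).
Let vol := bform Q omJ f.
Let c := bform Q omJ s0.
Hypothesis vol_gt0 : 0 < vol.
Hypothesis xi_embE : forall x, xi (emb x) =
  emb x + bform Q x (f + s0) *: (wU R - emb f) + bform Q x f *: (wsU R - emb (f + s0)).
Hypotheses (xi_wU : xi (wU R) = emb f) (xi_wsU : xi (wsU R) = emb (f + s0)).

Definition Bmirror := vol^-1 *: omJ - (2 + c / vol) *: f - s0.

Let vol_neq0 : vol != 0. Proof. exact: lt0r_neq0. Qed.

Lemma Bmirror_perp x :
  bform Q x omJ = 0 -> bform Q x f = 0 -> bform Q x s0 = 0 -> bform Q x Bmirror = 0.
Proof.
by move=> xJ xf xs0; rewrite /Bmirror !bformBr // !bformZr // xJ xf xs0 !mulr0 !subr0.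
Qed.

Lemma bform_f_Bmirror : bform Q f Bmirror = 0.
Proof.
rewrite /Bmirror !bformBr // !bformZr // (bformC Qsym f) f_f f_s0 -/vol.
by rewrite mulr0 subr0 mulVf // subrr.
Qed.

Lemma bform_s0_Bmirror : bform Q s0 Bmirror = 0.
Proof.
rewrite /Bmirror !bformBr // !bformZr // (bformC Qsym s0) (bformC Qsym s0 f) f_s0 s0_s0 -/c.
by field.
Qed.

Lemma bform_Bmirror_Bmirror :
  bform Q Bmirror Bmirror = bform Q omJ omJ / vol ^+ 2 - 2 - 2 * c / vol.
Proof.
rewrite {1}/Bmirror !bformBl !bformZl bform_f_Bmirror bform_s0_Bmirror mulr0 !subr0.
rewrite /Bmirror !bformBr // !bformZr // -/vol -/c.
by field.
Qed.

Lemma xi_emb_fixed x : bform Q x f = 0 -> bform Q x s0 = 0 -> xi (emb x) = emb x.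
Proof. by move=> xf xs0; rewrite xi_embE bformDr // xf xs0 addr0 !scale0r !addr0. Qed.

Lemma mirror_gamma :
  pplane_eq (xi_tilde xi (gamma Q (omJ, omK) omI 0))
    (gamma Q (vol^-1 *: ((2^-1 * bform Q omI omI) *: f + s0 + f), vol^-1 *: omI)
       (vol^-1 *: omK) Bmirror).
Proof.
have omI_B : bform Q omI Bmirror = 0 by exact: Bmirror_perp.
have omK_B : bform Q omK Bmirror = 0 by exact: Bmirror_perp.
have w_coef : 2^-1 * (bform Q (vol^-1 *: omK) (vol^-1 *: omK) - bform Q Bmirror Bmirror)
    = 1 + c / vol.
  by rewrite bformZl bformZr // omK_omK bform_Bmirror_Bmirror; field.
rewrite /xi_tilde /Defs.iota /act_pair /gamma /= !bformx0 !scale0r !subr0 emb0 addr0.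
rewrite linearD linearZ /= xi_wU xi_wsU (xi_embE omJ) bformDr // -/vol -/c.
rewrite (@xi_emb_fixed omI) // (@xi_emb_fixed omK) //.
rewrite w_coef !bformZl !bformDl !bformZl bform_f_Bmirror bform_s0_Bmirror omI_B omK_B.
have vinv_gt0 : 0 < vol^-1 by rewrite invr_gt0.
split; apply: oplane_eq_scale vinv_gt0 _ _; apply/rowP => j;
  rewrite /emb /wU /wsU /Bmirror !mxE; case: splitP => k _; rewrite !mxE /=; by field.
Qed.

End Mirror.

Theorem mainTheorem19 (R : realType) (Q : 'M[int]_22)
  (omI omJ omK : 'rV[R]_22) (fZ s0Z : 'rV[int]_22)
  (xi : {linear 'rV[R]_(22 + 2) -> 'rV[R]_(22 + 2)}) :
  is_K3_lattice R Q ->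
  (* cohomology classes of the hyperkaehler Kaehler forms omega_I, omega_J, omega_K *)
  0 < bform Q omI omI ->
  bform Q omJ omJ = bform Q omI omI -> bform Q omK omK = bform Q omI omI ->
  bform Q omI omJ = 0 -> bform Q omJ omK = 0 -> bform Q omK omI = 0 ->
  let f := intv R fZ in let s0 := intv R s0Z in
  (* fibre class f and section class [sigma_0] of the elliptic K3 Y = (M,J) *)
  bform Q f f = 0 -> bform Q s0 s0 = -2 -> bform Q f s0 = 1 ->
  (* f, [sigma_0] are algebraic on Y: orthogonal to sigma_J = omega_K + i omega_I *)
  bform Q f omK = 0 -> bform Q f omI = 0 ->
  bform Q s0 omK = 0 -> bform Q s0 omI = 0 ->
  (* vol(f) = <omega_J, f> > 0 (f effective, omega_J Kaehler on Y) *)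
  0 < bform Q omJ f ->
  let v := f in let vs := f + s0 in
  (* xi is the identity on Gamma' = U'^perp and swaps v <-> w, v^* <-> w^* *)
  (forall x : 'rV[int]_22, bform Q (intv R x) v = 0 -> bform Q (intv R x) vs = 0 ->
     xi (emb (intv R x)) = emb (intv R x)) ->
  xi (emb v) = wU R -> xi (emb vs) = wsU R ->
  xi (wU R) = emb v -> xi (wsU R) = emb vs ->
  let vol := bform Q omJ f in
  let sigI := (omJ, omK) in
  let sigv := (vol^-1 *: ((2^-1 * bform Q omI omI) *: f + s0 + f), vol^-1 *: omI) in
  let omv := vol^-1 *: sigI.2 in
  exists Bv : 'rV[R]_22,
    pplane_eq (xi_tilde xi (gamma Q (Psig sigI) omI 0)) (gamma Q (Psig sigv) omv Bv).
Proof.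
move=> [Qsym _ _ _] _ omJ_omJ omK_omK omI_omJ omJ_omK _ f s0 f_f s0_s0 f_s0
  f_omK f_omI s0_omK s0_omI vol_gt0 v vs xi_perp xi_v xi_vs xi_wU xi_wsU vol sigI sigv omv.
have vsE : intv R (fZ + s0Z) = f + s0 by rewrite intvD.
have vs_vs : bform Q (f + s0) (f + s0) = 0.
  by rewrite bformDl !bformDr // (bformC Qsym s0 f) f_f f_s0 s0_s0; ring.
have f_vs : bform Q f (f + s0) = 1 by rewrite bformDr // f_f f_s0 add0r.
have xi_embE x : xi (emb x) =
    emb x + bform Q x (f + s0) *: (wU R - emb f) + bform Q x f *: (wsU R - emb (f + s0)).
  by rewrite -vsE; apply: xi_emb; rewrite ?vsE.
exists (Bmirror Q omJ f s0).
apply: mirror_gamma => //; try by rewrite bformC.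
by rewrite omK_omK omJ_omJ.
Qed.
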